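(* Let $R_1,\dots,R_k$ be norms on $\mathbb{R}^p$, $\theta_1^*,\dots,\theta_k^*\in\mathbb{R}^p$, and $\mathcal{C}_i=\operatorname{cone}\{\Delta: R_i(\theta_i^*+\Delta)\le R_i(\theta_i^* )\}$. Let $$\mathcal{H}=\Big\{\sum_{i=1}^k\Delta_i:\Delta_i\in\mathcal{C}_i,\ \sum_{i=1}^k\|\Delta_i\|_2=1\Big\},\qquad \mathcal{A}=\Big(\sum_{i=1}^k\mathcal{C}_i\Big)\cap S^{p-1}.$$ Suppose the structural coherence condition holds with constant $\rho>0$, i.e. $\|\sum_{i=1}^k\Delta_i\|_2\ge\rho\sum_{i=1}^k\|\Delta_i\|_2$ for all $\Delta_i\in\mathcal{C}_i$. Then for every random vector $Z\in\mathbb{R}^p$ and every $\xi>0$, $$Q_{\rho\xi}(\mathcal{H};Z)\ \ge\ Q_\xi(\mathcal{A};Z).$$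
   Context: $\operatorname{cone}(E)$ is the smallest closed cone containing $E$; $S^{p-1}$ is the Euclidean unit sphere. For a set $E\subseteq\mathbb{R}^p$ and random vector $Z$, the marginal tail function is $Q_\xi(E;Z)=\inf_{u\in E}P(|\langle Z,u\rangle|\ge\xi)$. *)

From HB Require Import structures.
From mathcomp Require Import all_boot all_order all_algebra.
From mathcomp Require Import all_classical all_reals all_analysis.
Set Implicit Arguments. Unset Strict Implicit. Unset Printing Implicit Defensive.
Import Order.TTheory GRing.Theory Num.Theory.
Import numFieldNormedType.Exports.
Local Open Scope classical_set_scope.
Local Open Scope ring_scope.

Section Defs.
Variables (R : realType) (p : nat).

Definition dotp (x y : 'rV[R]_p) : R := \sum_(j < p) x ord0 j * y ord0 j.
Definition norm2 (x : 'rV[R]_p) : R := Num.sqrt (dotp x x).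

Definition is_norm (N : 'rV[R]_p -> R) : Prop :=
  [/\ forall x, N x = 0 -> x = 0,
      forall (c : R) x, N (c *: x) = `|c| * N x
    & forall x y, N (x + y) <= N x + N y].

Definition is_cone (K : set 'rV[R]_p) : Prop :=
  forall x (t : R), K x -> 0 <= t -> K (t *: x).

Definition cone_hull (E : set 'rV[R]_p) : set 'rV[R]_p :=
  [set x | forall K : set 'rV[R]_p, is_cone K -> closed K -> E `<=` K -> K x].

Definition descent_cone (N : 'rV[R]_p -> R) (th : 'rV[R]_p) : set 'rV[R]_p :=
  cone_hull [set D | N (th + D) <= N th].

Definition sphere : set 'rV[R]_p := [set x | norm2 x = 1].

Definition setH (k : nat) (C : 'I_k -> set 'rV[R]_p) : set 'rV[R]_p :=
  [set x | exists D : 'I_k -> 'rV[R]_p,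
     [/\ forall i, C i (D i), \sum_(i < k) norm2 (D i) = 1 & x = \sum_(i < k) D i]].

Definition sum_sets (k : nat) (C : 'I_k -> set 'rV[R]_p) : set 'rV[R]_p :=
  [set x | exists D : 'I_k -> 'rV[R]_p, (forall i, C i (D i)) /\ x = \sum_(i < k) D i].

Definition setA (k : nat) (C : 'I_k -> set 'rV[R]_p) : set 'rV[R]_p :=
  sum_sets C `&` sphere.

Definition Qtail (d : measure_display) (T : measurableType d)
    (P : probability T R) (xi : R) (E : set 'rV[R]_p) (Z : T -> 'rV[R]_p) : \bar R :=
  ereal_inf [set P [set w | xi <= `|dotp (Z w) u|] | u in E].

End Defs.

(* Normalising an element u of H lands in A, and coherence gives norm2 u >= rho
   because u is a sum of cone elements whose norms add up to 1. Hence the event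
   defining the tail of u / norm2 u at level xi is contained in the event
   defining the tail of u at level rho * xi, so every probability in the
   infimum over H dominates one in the infimum over A. *)
From HB Require Import structures.
From mathcomp Require Import all_boot all_order all_algebra.
From mathcomp Require Import all_classical all_reals all_analysis.
From mathcomp Require Import ring measurable_realfun.
Set Implicit Arguments. Unset Strict Implicit. Unset Printing Implicit Defensive.
Import Order.TTheory GRing.Theory Num.Theory.
Local Open Scope classical_set_scope.
Local Open Scope ring_scope.

Lemma cone_hull_is_cone (R : realType) (p : nat) (E : set 'rV[R]_p) :
  is_cone (cone_hull E).
Proof. move=> x t Ex t0 K Kcone Kcl EK; exact: Kcone (Ex K Kcone Kcl EK) t0. Qed.

Lemma dotpZr (R : realType) (p : nat) (x y : 'rV[R]_p) (c : R) :
  dotp x (c *: y) = c * dotp x y.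
Proof. by rewrite /dotp mulr_sumr; apply: eq_bigr => j _; rewrite mxE; ring. Qed.

Lemma norm2Z (R : realType) (p : nat) (x : 'rV[R]_p) (c : R) :
  norm2 (c *: x) = `|c| * norm2 x.
Proof.
rewrite /norm2; have -> : dotp (c *: x) (c *: x) = c ^+ 2 * dotp x x.
  by rewrite dotpZr /dotp !mulr_sumr; apply: eq_bigr => j _; rewrite mxE; ring.
by rewrite sqrtrM ?sqr_ge0 // sqrtr_sqr.
Qed.

Section Coherence.
Variables (R : realType) (p k : nat) (C : 'I_k -> set 'rV[R]_p) (rho : R).
Hypothesis C_cone : forall i, is_cone (C i).
Hypothesis coherence : forall D : 'I_k -> 'rV[R]_p,
  (forall i, C i (D i)) -> rho * \sum_(i < k) norm2 (D i) <= norm2 (\sum_(i < k) D i).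

Lemma setH_norm2_ge (u : 'rV[R]_p) : setH C u -> rho <= norm2 u.
Proof. by move=> [D [CD sum1 ->]]; have := coherence CD; rewrite sum1 mulr1. Qed.

Lemma setH_normalized_setA (u : 'rV[R]_p) :
  0 < rho -> setH C u -> setA C ((norm2 u)^-1 *: u).
Proof.
move=> rho_gt0 Hu; have u_gt0 : 0 < norm2 u := lt_le_trans rho_gt0 (setH_norm2_ge Hu).
split.
  case: Hu => D [CD _ defu]; exists (fun i => (norm2 u)^-1 *: D i).
  by split=> [i|]; [apply: C_cone; rewrite ?invr_ge0 ?ltW | rewrite -scaler_sumr -defu].
by rewrite /sphere /= norm2Z ger0_norm ?invr_ge0 ?ltW // mulVf ?gt_eqF.
Qed.

End Coherence.

Lemma tail_event_rescale (R : realType) (p : nat) (z u : 'rV[R]_p) (xi rho c : R) :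
  0 < rho -> rho <= c -> 0 <= xi ->
  xi <= `|dotp z (c^-1 *: u)| -> rho * xi <= `|dotp z u|.
Proof.
move=> rho_gt0 rho_le_c xi_ge0; have c_gt0 := lt_le_trans rho_gt0 rho_le_c.
rewrite dotpZr normrM gtr0_norm ?invr_gt0 // ler_pdivlMl //.
exact: le_trans (ler_wpM2r xi_ge0 rho_le_c).
Qed.

Section Tail.
Variables (R : realType) (p : nat) (d : measure_display) (T : measurableType d).
Variables (P : probability T R) (Z : T -> 'rV[R]_p).
Hypothesis Z_measurable : forall j : 'I_p, measurable_fun setT (fun w => Z w ord0 j).

Lemma measurable_tail_event (u : 'rV[R]_p) (xi : R) :
  measurable [set w | xi <= `|dotp (Z w) u|].
Proof.
have mf : measurable_fun setT (fun w => `|dotp (Z w) u|).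
  apply: measurableT_comp; first exact: normr_measurable.
  by apply: measurable_sum => j; apply: measurable_funM.
have := mf measurableT _ (measurable_itv `[xi, +oo[).
by rewrite setTI; congr measurable; apply/seteqP; split => w /=; rewrite in_itv /= andbT.
Qed.

Lemma Qtail_le_rescaled (E F : set 'rV[R]_p) (xi rho : R) :
  0 < rho -> 0 <= xi ->
  (forall u, F u -> exists2 c, rho <= c & E (c^-1 *: u)) ->
  (Qtail P xi E Z <= Qtail P (rho * xi) F Z)%E.
Proof.
move=> rho_gt0 xi_ge0 FE; apply: le_ereal_inf_tmp => _ [u /FE [c rho_le_c Ecu] <-].
apply: (le_trans (ereal_inf_lbound _)); first by exists (c^-1 *: u).
apply: le_measure; rewrite ?inE; try exact: measurable_tail_event.
by move=> w; apply: tail_event_rescale.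
Qed.

End Tail.

Theorem lemma2 (R : realType) (p k : nat)
  (Rn : 'I_k -> 'rV[R]_p -> R) (th : 'I_k -> 'rV[R]_p) (rho : R)
  (hnorm : forall i, is_norm (Rn i))
  (hrho : 0 < rho)
  (hcoh : forall D : 'I_k -> 'rV[R]_p,
     (forall i, descent_cone (Rn i) (th i) (D i)) ->
     rho * \sum_(i < k) norm2 (D i) <= norm2 (\sum_(i < k) D i))
  (d : measure_display) (T : measurableType d) (P : probability T R)
  (Z : T -> 'rV[R]_p)
  (hZ : forall j : 'I_p, measurable_fun setT (fun w => Z w ord0 j))
  (xi : R) (hxi : 0 < xi) :
  (Qtail P xi (setA (fun i => descent_cone (Rn i) (th i))) Z
   <= Qtail P (rho * xi) (setH (fun i => descent_cone (Rn i) (th i))) Z)%E.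
Proof.
have C_cone i : is_cone (descent_cone (Rn i) (th i)) by exact: cone_hull_is_cone.
apply: Qtail_le_rescaled => //; first exact: ltW.
move=> u Hu; exists (norm2 u).
  exact: (setH_norm2_ge (C := fun i => descent_cone (Rn i) (th i)) hcoh).
exact: (setH_normalized_setA (C := fun i => descent_cone (Rn i) (th i)) C_cone hcoh).
Qed.
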